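(* Let $N = n+1 \ge 4$ be even. The height function $\omega: S_{C_N} \to \mathbb{Z}$ given by $\omega(\mathbf{0}) = 0$, $\omega(\pm \mathbf{e}_1) = 2$, and $\omega(\mathbf{a}) = 1$ for all other $\mathbf{a}\in S_{C_N}$ induces a regular unimodular triangulation $\Delta_N$ of the point configuration $S_{C_N}$ (whose convex hull is $P_{C_N}$). Specifically, \[ \Delta_N = \bigcup_{\boldsymbol{\lambda} \in \Lambda_N} \Delta_+(G^{\mathbf{0}}_{\boldsymbol{\lambda}}). \]
   Context: $\mathbf{e}_1,\dots,\mathbf{e}_n$ is the standard basis of $\mathbb{R}^n$, with the convention $\mathbf{e}_0 = \mathbf{e}_N = \mathbf{0}$. The cycle graph $C_N$ has vertices $0,\dots,N-1$ and edges $\{0,1\},\dots,\{N-2,N-1\},\{N-1,0\}$. The adjacency polytope is $P_{C_N} = \operatorname{conv}\{\mathbf{e}_i - \mathbf{e}_j \mid \{i,j\} \text{ an edge of } C_N\}$ (both orientations), and $S_{C_N} = \{\mathbf{0}\}\cup\{\mathbf{e}_i - \mathbf{e}_j \mid \{i,j\} \text{ an edge}\}$. For even $N$, $\Lambda_N = \{(\lambda_1,\dots,\lambda_N)\in\{-1,1\}^N \mid \sum_i\lambda_i = 0\}$. For $\boldsymbol{\lambda}\in\Lambda_N$, set $\mathbf{v}_0=\mathbf{0}$, $\mathbf{v}_i = \lambda_i(\mathbf{e}_{i-1}-\mathbf{e}_i)$ ($1\le i\le N$), $V_N = \{\mathbf{v}_0,\dots,\mathbf{v}_N\}$, $G^{\mathbf{0}}_{\boldsymbol{\lambda}}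 = \operatorname{conv}V_N$, and $\Delta_+(G^{\mathbf{0}}_{\boldsymbol{\lambda}}) = \{\operatorname{conv}(V_N\setminus\{\mathbf{v}_i\}) \mid 1\le i\le N,\ \lambda_i = \lambda_1\}$. The regular subdivision induced by $\omega$ is the set of projections to $\mathbb{R}^n$ of the lower facets (facets with inner normal having positive last coordinate) of $\operatorname{conv}\{(\mathbf{a},\omega(\mathbf{a})) \mid \mathbf{a}\in S_{C_N}\}$. A triangulation is unimodular if every simplex is a lattice simplex of normalized volume $1$ (i.e., $n!$ times its Euclidean volume equals $1$), and it is a triangulation of the point configuration $S_{C_N}$ if all simplices have vertices in $S_{C_N}$. *)

From HB Require Import structures.
From mathcomp Require Import all_boot all_order all_algebra.
From mathcomp Require Import reals.
Set Implicit Arguments. Unset Strict Implicit. Unset Printing Implicit Defensive.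
Import Order.TTheory GRing.Theory Num.Theory.
Local Open Scope ring_scope.

Section Defs.
Variable R : realType.
Variable n : nat.
Local Notation N := n.+1.
Local Notation vec := 'rV[R]_n.

(* standard basis e_1..e_n of R^n, with e_0 = e_N = 0 (and e_i = 0 for i > n) *)
Definition ebasis (i : nat) : vec :=
  if (0 < i)%N && (i <= n)%N then \row_(j < n) (if (j : nat) == i.-1 then 1 else 0)
  else 0.

Definition cycle_edge (i j : nat) : bool :=
  [&& (i < N)%N, (j < N)%N & (j == (i.+1 %% N)%N) || (i == (j.+1 %% N)%N)].

Definition S_CN (a : vec) : Prop :=
  a = 0 \/ exists i j : nat, cycle_edge i j /\ a = ebasis i - ebasis j.

Definition dotv (c a : vec) : R := \sum_(k < n) c 0 k * a 0 k.

Definition conv (X : vec -> Prop) : vec -> Prop := fun x =>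
  exists (k : nat) (p : 'I_k -> vec) (w : 'I_k -> R),
    (forall i, X (p i)) /\ (forall i, 0 <= w i) /\ \sum_(i < k) w i = 1 /\
    x = \sum_(i < k) w i *: p i.

Definition P_CN : vec -> Prop :=
  conv (fun a => exists i j : nat, cycle_edge i j /\ a = ebasis i - ebasis j).

Definition omega (a : vec) : R :=
  if a == 0 then 0
  else if (a == ebasis 1) || (a == - ebasis 1) then 2 else 1.

Definition diffmx (b : 'I_n.+1 -> vec) : 'M[R]_n :=
  \matrix_(i < n, k < n) (b (lift ord0 i) 0 k - b ord0 0 k).

(* F (a set of points) has affine dimension n: it contains n+1 affinely
   independent points *)
Definition full_dim (F : vec -> Prop) : Prop :=
  exists b : 'I_n.+1 -> vec, (forall i, F (b i)) /\ \det (diffmx b) != 0.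

(* A cell C (a subset of R^n) of the regular subdivision of S_{C_N} induced by
   omega: C is the projection of a lower facet of
   conv {(a, omega a) | a in S_{C_N}}, i.e. (normalizing the inner normal to
   (c, 1)) C = conv F where F is the set of points of S_{C_N} on which
   a |-> <c,a> + omega a attains its minimum h, and F has affine dimension n. *)
Definition regular_subdivision_cell (C : vec -> Prop) : Prop :=
  exists (c : vec) (h : R),
    (forall a, S_CN a -> h <= dotv c a + omega a) /\
    let F := fun a => S_CN a /\ dotv c a + omega a = h in
    full_dim F /\ (forall x, C x <-> conv F x).

Definition in_Lambda (lam : nat -> int) : Prop :=
  (forall i, (1 <= i <= N)%N -> lam i = 1 \/ lam i = -1) /\
  \sum_(1 <= i < N.+1) lam i = 0.

Definition vpt (lam : nat -> int) (i : nat) : vec :=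
  if i == 0%N then 0 else (lam i)%:~R *: (ebasis i.-1 - ebasis i).

Definition V_N (lam : nat -> int) : vec -> Prop :=
  fun x => exists j : nat, (j <= N)%N /\ x = vpt lam j.

Definition Delta_cell (C : vec -> Prop) : Prop :=
  exists lam : nat -> int, in_Lambda lam /\
  exists i : nat, [/\ (1 <= i <= N)%N, lam i = lam 1%N &
    forall x, C x <-> conv (fun y => V_N lam y /\ y <> vpt lam i) x].

(* C is a unimodular lattice simplex with vertices in S_{C_N}: the convex hull of
   n+1 points of S_{C_N} (lattice points) of normalized volume
   n! * vol = |det(b_1 - b_0, ..., b_n - b_0)| = 1 *)
Definition unimodular_simplex_in_S (C : vec -> Prop) : Prop :=
  exists b : 'I_n.+1 -> vec,
    (forall i, S_CN (b i)) /\ `|\det (diffmx b)| = 1 /\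
    (forall x, C x <-> conv (fun y => exists i, y = b i) x).

End Defs.

(* Write [u_k = e_(k-1) - e_k] for [1 <= k <= N], so that S_{C_N} = {0, +-u_k}; the
   only linear relation among the [u_k] is [u_1 + ... + u_N = 0], and any [n] of them
   form a basis.  The functional [a |-> <c, a> + omega a] takes the value
   [omega_k + eps <c, u_k>] at [eps u_k], where [omega_1 = 2] and [omega_k = 1] otherwise.
   If its minimizers on S_{C_N} span a full-dimensional cell, they lie on no hyperplane.
   This forces the minimum to be [0] and every edge but at most one, [i], to be tight:
   [<c, u_k> = - lambda_k omega_k] for a sign [lambda_k].  Since the slopes [<c, u_k>] sum
   to [0], the sign at [i] is then determined, with [sum lambda = 0] and
   [lambda_i = lambda_1]; for [i = 1] this uses that [N - 1] is odd.  The cell is then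
   [conv (V_N \ {v_i})].  Conversely, every such [(lambda, i)] is realized by prescribing
   these slopes.  The simplex is unimodular because its edge matrix factors into a
   diagonal sign matrix, an elementary matrix and a triangular matrix with [-1] on the
   diagonal. *)

From Pilot Require Import Defs.
From HB Require Import structures.
From mathcomp Require Import all_boot all_order all_algebra.
From mathcomp Require Import reals.
From mathcomp Require Import zify ring lra.
Set Implicit Arguments. Unset Strict Implicit. Unset Printing Implicit Defensive.
Import Order.TTheory GRing.Theory Num.Theory.
Local Open Scope ring_scope.

Definition is_sign (x : int) := x = 1 \/ x = -1.

Lemma sum_signs_parity (s : nat -> int) (r : seq nat) :
  (forall k, k \in r -> is_sign (s k)) ->
  exists q : int, \sum_(k <- r) s k = (size r)%:Z + 2 * q.
Proof.
elim: r => [|k r IH] s_r; first by exists 0; rewrite big_nil.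
rewrite big_cons /=.
have [q ->] : exists q : int, \sum_(l <- r) s l = (size r)%:Z + 2 * q.
  by apply: IH => l lr; apply: s_r; rewrite inE lr orbT.
case: (s_r k (mem_head k r)) => ->.
  by exists q; lia.
by exists (q - 1); lia.
Qed.

Lemma sum_odd_signs_small (s : nat -> int) (r : seq nat) : odd (size r) ->
  (forall k, k \in r -> is_sign (s k)) -> `|\sum_(k <- r) s k| <= 2 ->
  is_sign (\sum_(k <- r) s k).
Proof.
move=> r_odd r_signs; have [q ->] := sum_signs_parity r_signs.
have [p ->] : exists p, size r = (2 * p).+1.
  by exists (size r)./2; rewrite -[size r in LHS]odd_double_half r_odd; lia.
by rewrite /is_sign; lia.
Qed.

Lemma sum_nat_D1 (V : zmodType) (F : nat -> V) a b i : (a <= i < b)%N ->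
  \sum_(a <= k < b) F k = F i + \sum_(a <= k < b | k != i) F k.
Proof. by move=> iab; rewrite (bigD1_seq i) ?mem_index_iota ?iota_uniq. Qed.

Section CyclePolytope.
Variables (R : realType) (n : nat).
Local Notation N := n.+1.
Local Notation vec := 'rV[R]_n.
Local Notation e := (ebasis R n).
Local Notation vpt := (Defs.vpt R n).
Local Notation V_N := (@Defs.V_N R n).
Implicit Types (a b c d y : vec) (lam : nat -> int).

Lemma ebasis_coord m (q : 'I_n) : e m 0 q = (m == q.+1)%:R.
Proof.
rewrite /ebasis; case: ifP => [/andP[m0 mn]|]; rewrite mxE.
  by case: m m0 mn => //= m _ _; rewrite eqSS eq_sym; case: eqP.
by case: eqP => // ->; rewrite ltn_ord.
Qed.

Lemma ebasis0 : e 0 = 0. Proof. by []. Qed.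
Lemma ebasisN : e N = 0. Proof. by rewrite /ebasis ltnn andbF. Qed.

Lemma ebasis_mod m : (m <= N)%N -> e (m %% N) = e m.
Proof.
by rewrite leq_eqVlt => /orP[/eqP->|mN]; [rewrite modnn ebasisN | rewrite modn_small].
Qed.

Lemma dotvD c a b : dotv c (a + b) = dotv c a + dotv c b.
Proof. by rewrite /dotv -big_split; apply: eq_bigr => k _; rewrite mxE mulrDr. Qed.

Lemma dotvZ c (s : R) a : dotv c (s *: a) = s * dotv c a.
Proof. by rewrite /dotv mulr_sumr; apply: eq_bigr => k _; rewrite mxE mulrCA. Qed.

Lemma dotvN c a : dotv c (- a) = - dotv c a.
Proof. by rewrite -scaleN1r dotvZ mulN1r. Qed.

Lemma dotvB c a b : dotv c (a - b) = dotv c a - dotv c b.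
Proof. by rewrite dotvD dotvN. Qed.

Lemma dotv0 c : dotv c 0 = 0.
Proof. by rewrite -(scale0r 0) dotvZ mul0r. Qed.

Lemma dotv0l a : dotv 0 a = 0.
Proof. by rewrite /dotv big1 // => k _; rewrite mxE mul0r. Qed.

Lemma dotv_sum c (I : Type) (r : seq I) (P : pred I) (F : I -> vec) :
  dotv c (\sum_(k <- r | P k) F k) = \sum_(k <- r | P k) dotv c (F k).
Proof. by apply: big_morph; [exact: dotvD | exact: dotv0]. Qed.

Definition edgev k : vec := e k.-1 - e k.
Definition slope c k := dotv c (edgev k).
Definition edge_omega k : R := if k == 1%N then 2 else 1.
Definition height c a := dotv c a + omega a.

Lemma edgev_coord k (q : 'I_n) : edgev k 0 q = (k.-1 == q.+1)%:R - (k == q.+1)%:R.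
Proof. by rewrite !mxE !ebasis_coord. Qed.

Lemma sum_edgev : \sum_(1 <= k < N.+1) edgev k = 0.
Proof.
rewrite (@telescope_sumr_eq _ _ _ (fun k => - e k.-1)) //= ?ebasisN ?oppr0 ?addr0 //.
by move=> k _; rewrite /edgev opprK addrC.
Qed.

Lemma sum_slope c : \sum_(1 <= k < N.+1) slope c k = 0.
Proof. by rewrite -dotv_sum sum_edgev dotv0. Qed.

Lemma sum_int_edge_omega (s : nat -> int) :
  \sum_(1 <= k < N.+1) (s k)%:~R * edge_omega k
  = (s 1%N)%:~R + (\sum_(1 <= k < N.+1) s k)%:~R :> R.
Proof.
rewrite big_ltn // [in RHS]big_ltn // rmorphD rmorph_sum /edge_omega /= addrA.
congr (_ + _); first by rewrite mulr_natr mulr2n.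
by apply: eq_big_nat => k /andP[k2 _]; rewrite gtn_eqF // mulr1.
Qed.

Lemma dotv_row_ebasis (P : nat -> R) m : P 0%N = 0 -> P N = 0 -> (m <= N)%N ->
  dotv (\row_(q < n) P q.+1) (e m) = P m.
Proof.
move=> P0 PN mN; rewrite /dotv.
under eq_bigr do rewrite ebasis_coord mxE.
case: m mN => [_|m mN]; first by rewrite P0 big1 // => q _; rewrite mulr0.
case: (ltnP m n) => [lt|ge]; last first.
  have -> : m = n by lia.
  by rewrite PN big1 // => q _; rewrite eqSS gtn_eqF ?mulr0.
rewrite (bigD1 (Ordinal lt)) //= eqxx mulr1 big1 ?addr0 // => q /eqP qm.
by rewrite eqSS (_ : (m == q) = false) ?mulr0 //; apply/eqP => mq; apply: qm; apply: val_inj.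
Qed.

(* [d] is read off the potential [m |-> <d, e_m>], which must vanish at [0] and [N]. *)
Lemma prescribe_slopes (t : nat -> R) j : (1 <= j <= N)%N ->
  exists d, forall k, (1 <= k <= N)%N -> k != j -> slope d k = t k.
Proof.
move=> /andP[j1 jN].
pose P m := if (m < j)%N then - \sum_(1 <= l < m.+1) t l
            else \sum_(m.+1 <= l < N.+1) t l.
have P0 : P 0%N = 0 by rewrite /P j1 big_geq ?oppr0.
have PN : P N = 0 by rewrite /P ltnNge jN /= big_geq.
exists (\row_(q < n) P q.+1) => k /andP[k1 kN] kj.
rewrite /slope dotvB !dotv_row_ebasis // ?(leq_trans (leq_pred k)) // /P.
case: (ltnP k j) => kj'.
  rewrite (leq_ltn_trans (leq_pred k)) // prednK // (big_nat_recr k) //=; ring.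
have -> : (k.-1 < j)%N = false by lia.
rewrite prednK // (big_ltn (m := k)) //=; ring.
Qed.

Lemma S_CN_signedP a : S_CN a <->
  a = 0 \/ exists k (eps : int),
    [/\ (1 <= k <= N)%N, is_sign eps & a = eps%:~R *: edgev k].
Proof.
split.
  case=> [->|[i [j [/and3P[iN jN /orP[]/eqP -> ->]]]]]; [by left|right..].
    exists i.+1, 1; rewrite scale1r /edgev ebasis_mod //.
    by split => //; left.
  exists j.+1, (-1); rewrite scaleN1r /edgev ebasis_mod // opprB.
  by split => //; right.
case=> [->|[k [eps [/andP[k1 kN] [] -> ->]]]]; [by left|right..].
  exists k.-1, (k %% N)%N; rewrite scale1r /edgev ebasis_mod //; split => //.
  by rewrite /cycle_edge ltn_pmod // prednK // eqxx andbT; lia.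
exists (k %% N)%N, k.-1; rewrite scaleN1r /edgev ebasis_mod // opprB; split => //.
by rewrite /cycle_edge ltn_pmod // prednK // eqxx orbT andbT; lia.
Qed.

Lemma omega_eq1 a (q : 'I_n) : a 0 q != 0 -> q != 0%N :> nat -> omega a = 1.
Proof.
move=> aq q0; have e1q : e 1 0 q = 0 by rewrite ebasis_coord eqSS eq_sym (negbTE q0).
rewrite /omega; case: eqP => [a0|_]; first by move: aq; rewrite a0 mxE eqxx.
case: eqP => [a1|_]; first by move: aq; rewrite a1 e1q eqxx.
by case: eqP => [a1|_] //; move: aq; rewrite a1 mxE e1q oppr0 eqxx.
Qed.

Lemma omega_signed_edge k (eps : int) : (2 <= n)%N -> (1 <= k <= N)%N -> is_sign eps ->
  omega (eps%:~R *: edgev k) = edge_omega k.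
Proof.
move=> n2 /andP[k1 kN] eps_pm.
have eps0 : eps%:~R != 0 :> R by rewrite intr_eq0; case: eps_pm => ->.
case: (eqVneq k 1%N) => [->|k_neq1].
  have e1_neq0 : e 1 != 0.
    apply/eqP => /rowP /(_ (Ordinal (ltnW n2))) /eqP.
    by rewrite ebasis_coord mxE oner_eq0.
  rewrite /edgev ebasis0 sub0r /omega /edge_omega /=.
  by case: eps_pm => ->; rewrite ?scale1r ?scaleN1r ?opprK ?oppr_eq0 (negbTE e1_neq0) eqxx ?orbT.
have [lt_q|] := ltnP (minn k n).-1 n; last by lia.
rewrite /edge_omega (negbTE k_neq1).
apply: (@omega_eq1 _ (Ordinal lt_q)); last by rewrite /=; lia.
rewrite mxE mulf_neq0 // edgev_coord /=.
case: (leqP k n) => kn.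
  rewrite prednK // eqxx (_ : (k.-1 == k) = false) ?sub0r ?oppr_eq0 ?oner_eq0 //.
  by apply/eqP; lia.
have -> : k = N by apply/eqP; rewrite eqn_leq kN.
by rewrite (prednK (ltnW n2)) /= eqxx gtn_eqF //= subr0 oner_eq0.
Qed.

Lemma height_signed_edge c k (eps : int) : (2 <= n)%N -> (1 <= k <= N)%N -> is_sign eps ->
  height c (eps%:~R *: edgev k) = edge_omega k + eps%:~R * slope c k.
Proof. by move=> n2 kN eps_pm; rewrite /height dotvZ omega_signed_edge // addrC. Qed.

Lemma hyperplane_normal_eq0 (b : 'I_N -> vec) d (t : R) :
  (forall r, dotv d (b r) = t) -> \det (Defs.diffmx b) != 0 -> d = 0.
Proof.
move=> b_on; apply: contraNeq => d_neq0; rewrite -det_tr; apply/det0P.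
exists d => //; apply/rowP => r; rewrite !mxE.
transitivity (dotv d (b (lift ord0 r) - b ord0)); last by rewrite dotvB !b_on subrr.
by apply: eq_bigr => k _; rewrite !mxE.
Qed.

Lemma conv_ext (X Y : vec -> Prop) : (forall y, X y <-> Y y) ->
  forall x, conv X x <-> conv Y x.
Proof.
move=> XY x; split; case=> k [p [w [Xp w_conv]]]; exists k, p, w;
  by split => // i; apply/XY.
Qed.

Lemma height0 c : height c 0 = 0.
Proof. by rewrite /height dotv0 /omega eqxx addr0. Qed.

Lemma edge_omega_gt0 k : 0 < edge_omega k.
Proof. by rewrite /edge_omega; case: ifP. Qed.

Lemma is_sign_sqr (eps : int) : is_sign eps -> eps%:~R * eps%:~R = 1 :> R.
Proof. by case=> ->; rewrite ?mulrNN mulr1. Qed.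

Definition signs lam := forall k, (1 <= k <= N)%N -> is_sign (lam k).

Lemma vpt_edge lam j : (0 < j)%N -> vpt lam j = (lam j)%:~R *: edgev j.
Proof. by rewrite /vpt; case: j. Qed.

Lemma vpt_S lam j : signs lam -> (j <= N)%N -> S_CN (vpt lam j).
Proof.
move=> lam_sign jN; apply/S_CN_signedP; case: j jN => [|j] jN; first by left.
by right; exists j.+1, (lam j.+1); rewrite vpt_edge //; split => //; apply: lam_sign.
Qed.

(* [(c, 1)] is an inner normal of the lifted facet over [conv (V_N lam \ {vpt lam i})]. *)
Definition Delta_normal c lam i :=
  (forall k, (1 <= k <= N)%N -> k != i ->
     slope c k = - (lam k)%:~R * edge_omega k) /\
  `|slope c i| < edge_omega i.

Lemma slope_missing_edge c lam i : (1 <= i <= N)%N ->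
  \sum_(1 <= k < N.+1) lam k = 0 ->
  (forall k, (1 <= k <= N)%N -> k != i -> slope c k = - (lam k)%:~R * edge_omega k) ->
  slope c i = (lam 1%N)%:~R - (lam i)%:~R * edge_omega i.
Proof.
move=> iN lam_sum c_slope.
have iN1 : (1 <= i < N.+1)%N by rewrite ltnS.
have sum_lam := sum_int_edge_omega lam.
rewrite lam_sum addr0 (sum_nat_D1 _ iN1) in sum_lam.
have := sum_nat_D1 (slope c) iN1; rewrite sum_slope.
have -> : \sum_(1 <= k < N.+1 | k != i) slope c k =
          - \sum_(1 <= k < N.+1 | k != i) (lam k)%:~R * edge_omega k.
  rewrite -sumrN [LHS]big_seq_cond [RHS]big_seq_cond; apply: eq_bigr => k /andP[].
  by rewrite mem_index_iota ltnS => kN ki; rewrite c_slope // mulNr.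
lra.
Qed.

Lemma is_sign_edge_omega_bound (x : int) k : is_sign x ->
  `|x%:~R - x%:~R * edge_omega k| < edge_omega k.
Proof.
by rewrite /edge_omega; case: ifP => _; case=> ->; rewrite ltr_norml; apply/andP; split; lra.
Qed.

Lemma exists_Delta_normal lam i : signs lam -> \sum_(1 <= k < N.+1) lam k = 0 ->
  (1 <= i <= N)%N -> lam i = lam 1%N -> exists c, Delta_normal c lam i.
Proof.
move=> lam_sign lam_sum iN lam_i1.
have [c c_slope] := prescribe_slopes (fun k => - (lam k)%:~R * edge_omega k) iN.
exists c; split => //; rewrite (slope_missing_edge iN lam_sum c_slope) lam_i1.
by apply: is_sign_edge_omega_bound; exact: lam_sign.
Qed.

Definition Delta_vertex lam i y := exists j, [/\ (j <= N)%N, j != i & y = vpt lam j].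

Section DeltaCell.
Variables (lam : nat -> int) (i : nat) (c : vec).
Hypotheses (n2 : (2 <= n)%N) (lam_sign : signs lam) (iN : (1 <= i <= N)%N).
Hypothesis c_normal : Delta_normal c lam i.

Lemma height_Delta_edge k (eps : int) : (1 <= k <= N)%N -> is_sign eps ->
  0 <= height c (eps%:~R *: edgev k) /\
  (height c (eps%:~R *: edgev k) = 0 <-> k != i /\ eps = lam k).
Proof.
move=> kN eps_sign; rewrite height_signed_edge //.
have omega_gt0 := edge_omega_gt0 k.
case: (eqVneq k i) => [ki|ki].
  have := c_normal.2; rewrite -ki ltr_norml => /andP[lo hi].
  by case: eps_sign => ->; split; try lra; split => [h0|[]]; try (exfalso; lra); done.
rewrite c_normal.1 //.
by case: eps_sign => ->; case: (lam_sign kN) => ->; split; try lra;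
  split => [h0|[_ /eqP eps_lam]]; try lra; try (exfalso; lra); done.
Qed.

Lemma height_vpt j : (j <= N)%N -> height c (vpt lam j) = 0 <-> j != i.
Proof.
case: j => [_|j jN].
  by rewrite height0; split => // _; rewrite eq_sym -lt0n; case/andP: iN.
have jN' : (1 <= j.+1 <= N)%N by [].
rewrite vpt_edge //; have [_ ->] := height_Delta_edge jN' (lam_sign jN').
by split=> [[]|].
Qed.

Lemma height_Delta_ge0 a : S_CN a -> 0 <= height c a.
Proof.
case/S_CN_signedP => [->|[k [eps [kN eps_sign ->]]]]; first by rewrite height0.
exact: (height_Delta_edge kN eps_sign).1.
Qed.

Lemma Delta_argminP y : S_CN y /\ height c y = 0 <-> Delta_vertex lam i y.
Proof.
split=> [[/S_CN_signedP [->|[k [eps [kN eps_sign ->]]]]]|[j [jN ji ->]]].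
- by exists 0%N; split; rewrite // eq_sym -lt0n; case/andP: iN.
- case/(height_Delta_edge kN eps_sign).2 => ki ->; have k0 : (0 < k)%N by case/andP: kN.
  by exists k; split; rewrite ?vpt_edge //; case/andP: kN.
- by split; [exact: vpt_S | exact/height_vpt].
Qed.

Lemma Delta_vertexP y : V_N lam y /\ y <> vpt lam i <-> Delta_vertex lam i y.
Proof.
split=> [[[j [jN ->]] vji]|[j [jN ji ->]]].
  by exists j; split => //; apply/eqP => ji; apply: vji; rewrite ji.
split=> [|vji]; first by exists j.
have iN' : (i <= N)%N by case/andP: iN.
by move/(height_vpt jN): ji; rewrite vji => /(height_vpt iN'); rewrite eqxx.
Qed.

End DeltaCell.

Definition edge_mx : 'M[R]_n := \matrix_(r < n) edgev r.+1.

Lemma det_edge_mx : `|\det edge_mx| = 1.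
Proof.
have entry (r q : 'I_n) : edge_mx r q = ((r : nat) == q.+1)%:R - (r == q :> nat)%:R.
  by rewrite mxE edgev_coord eqSS.
rewrite det_trig; last first.
  apply/is_trig_mxP => r q rq; have rq' : (r < q.+1)%N by rewrite ltnS ltnW.
  by rewrite entry (ltn_eqF rq) (ltn_eqF rq') subrr.
rewrite normr_prod big1 // => r _.
by rewrite entry eqxx (ltn_eqF (ltnSn r)) sub0r normrN normr1.
Qed.

(* Left multiplication replaces the row [u_i] of [edge_mx] by [-(u_1 + ... + u_n) = u_N]. *)
Definition swap_edge_mx (i : nat) : 'M[R]_n :=
  \matrix_(p, q) (if (p : nat).+1 == i then -1 else (p == q)%:R).

Lemma det_swap_edge_mx i : `|\det (swap_edge_mx i)| = 1.
Proof.
have [lt_i|ge_i] := ltnP i.-1 n; last first.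
  suff -> : swap_edge_mx i = 1%:M by rewrite det1 normr1.
  by apply/matrixP => p q; rewrite !mxE; case: eqP => // pi; move: ge_i (ltn_ord p); lia.
case: i lt_i => [_|i lt_i].
  suff -> : swap_edge_mx 0 = 1%:M by rewrite det1 normr1.
  by apply/matrixP => p q; rewrite !mxE.
set i0 := Ordinal lt_i.
rewrite (expand_det_col _ i0) (bigD1 i0) //= big1 ?addr0; last first.
  by move=> p p_i0; rewrite mxE eqSS (val_eqE p i0) (negbTE p_i0) mul0r.
rewrite /cofactor; have -> : row' i0 (col' i0 (swap_edge_mx i.+1)) = 1%:M.
  apply/matrixP => p q; rewrite !mxE eqSS (val_eqE (lift i0 p) i0).
  by rewrite eq_sym (negbTE (neq_lift i0 p)) (inj_eq lift_inj).
by rewrite mxE eqxx det1 mulr1 /= eqxx normrM normrN normr1 mul1r normr_sign.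
Qed.

Lemma row_swap_edge_mx i (r : 'I_n) :
  row r (swap_edge_mx i *m edge_mx) = edgev (if r.+1 == i then N else r.+1).
Proof.
rewrite row_mul mulmx_sum_row.
under eq_bigr do rewrite rowK !mxE.
case: eqP => _.
  have sum_first : \sum_(q < n) edgev q.+1 = - edgev N.
    move: sum_edgev; rewrite big_add1 big_mkord big_ord_recr /=.
    by move/eqP; rewrite addr_eq0 => /eqP.
  rewrite -[edgev N]opprK -sum_first -sumrN.
  by apply: eq_bigr => q _; rewrite scaleN1r.
rewrite (bigD1 r) //= eqxx scale1r big1 ?addr0 // => q /negbTE.
by rewrite eq_sym => ->; rewrite scale0r.
Qed.

(* Lists the [v_j], [j <> i], with [v_N] in the slot of the missing [v_i]. *)
Definition Delta_index i (r : nat) : nat :=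
  if r == 0%N then 0%N else if r == i then N else r.

Lemma Delta_vertex_indexP lam i y : (1 <= i <= N)%N ->
  Delta_vertex lam i y <-> exists r : 'I_N, y = vpt lam (Delta_index i r).
Proof.
move=> /andP[i1 iN]; rewrite /Delta_index; split=> [[j [jN ji ->]]|[r ->]].
  have [jN'|/eqP jN'] := boolP (j == N).
    have i_lt : (i < N)%N by move: ji iN; rewrite (eqP jN'); lia.
    by exists (Ordinal i_lt); rewrite /= gtn_eqF // eqxx (eqP jN').
  have j_lt : (j < N)%N by rewrite ltn_neqAle jN andbT; exact/eqP.
  by exists (Ordinal j_lt); rewrite /= (negbTE ji); case: eqP => // ->.
exists (Delta_index i r); rewrite /Delta_index; split => //.
  by case: ifP => // _; case: ifP => // _; exact: ltnW.
case: ifP => _; first by rewrite eq_sym -lt0n.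
by case: ifP => [/eqP <-|/negbT //]; rewrite eq_sym ltn_eqF.
Qed.

Lemma det_Delta_simplex lam (i : nat) : signs lam ->
  `|\det (Defs.diffmx (fun r : 'I_N => vpt lam (Delta_index i r)))| = 1.
Proof.
move=> lam_sign.
pose j (r : 'I_n) := if r.+1 == i then N else r.+1.
have j_range r : (1 <= j r <= N)%N.
  by rewrite /j; case: eqP => //= _; exact: leqW (ltn_ord r).
rewrite (_ : Defs.diffmx _ =
             diag_mx (\row_r (lam (j r))%:~R) *m (swap_edge_mx i *m edge_mx)).
  rewrite !det_mulmx det_diag !normrM det_edge_mx det_swap_edge_mx !mulr1.
  rewrite normr_prod big1 // => r _; rewrite mxE.
  by case: (lam_sign _ (j_range r)) => ->; rewrite ?normrN normr1.
apply/row_matrixP => r; rewrite row_mul row_diag_mx -scalemxAl -rowE.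
rewrite row_swap_edge_mx mxE -vpt_edge; last by case/andP: (j_range r).
by apply/rowP => q; rewrite !mxE /Delta_index /= subr0.
Qed.

(* [eps = best_sign c k] minimizes the height [edge_omega k + eps * slope c k] of
   [eps u_k]; [slack c k] is that minimum. *)
Definition slack c k := edge_omega k - `|slope c k|.
Definition best_sign c k : int := if 0 < slope c k then -1 else 1.

Lemma best_signP c k :
  (0 < slope c k /\ best_sign c k = -1) \/ (slope c k <= 0 /\ best_sign c k = 1).
Proof. by rewrite /best_sign; case: (ltrP 0 (slope c k)); [left | right]. Qed.

Lemma best_sign_is_sign c k : is_sign (best_sign c k).
Proof. by case: (best_signP c k) => [[_ ->]|[_ ->]]; [right | left]. Qed.

Lemma best_sign_slope c k : (best_sign c k)%:~R * slope c k = - `|slope c k|.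
Proof.
case: (best_signP c k) => [[pos ->]|[neg ->]].
  by rewrite gtr0_norm // mulN1r.
by rewrite ler0_norm // opprK mul1r.
Qed.

Lemma slope_of_slack c k :
  slope c k = (best_sign c k)%:~R * (slack c k - edge_omega k).
Proof.
rewrite /slack addrAC subrr add0r -best_sign_slope mulrA.
by rewrite is_sign_sqr ?mul1r //; exact: best_sign_is_sign.
Qed.

Section RegularCell.
Variables (c : vec) (h : R) (b : 'I_N -> vec).
Hypothesis n2 : (2 <= n)%N.
Hypothesis height_ge : forall a, S_CN a -> h <= height c a.
Hypothesis b_argmin : forall r, S_CN (b r) /\ height c (b r) = h.
Hypothesis b_indep : \det (Defs.diffmx b) != 0.

Lemma min_height_le0 : h <= 0.
Proof. by rewrite -(height0 c); apply: height_ge; left. Qed.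

Lemma slack_ge k : (1 <= k <= N)%N -> h <= slack c k.
Proof.
move=> kN; have s_sign := best_sign_is_sign c k.
rewrite /slack -best_sign_slope -height_signed_edge //.
by apply: height_ge; apply/S_CN_signedP; right; exists k, (best_sign c k).
Qed.

Lemma argmin_edge y : S_CN y -> height c y = h ->
  (y = 0 /\ h = 0) \/
  exists k, [/\ (1 <= k <= N)%N, y = (best_sign c k)%:~R *: edgev k & slack c k = h].
Proof.
case/S_CN_signedP => [->|[k [eps [kN eps_sign ->]]]].
  by rewrite height0 => h0; left.
rewrite height_signed_edge // => h_y; right; exists k.
have omega_gt0 := edge_omega_gt0 k; have h_le0 := min_height_le0.
have := slack_ge kN; rewrite /slack.
case: (best_signP c k) => [[pos ->]|[neg ->]].
  by rewrite gtr0_norm // => h_slack; case: eps_sign h_y => -> h_y; [exfalso | split => //]; lra.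
by rewrite ler0_norm // => h_slack; case: eps_sign h_y => -> h_y; [split => // | exfalso]; lra.
Qed.

Lemma argmin_hyperplane d (t : R) :
  (forall y, S_CN y -> height c y = h -> dotv d y = t) -> d = 0 /\ t = 0.
Proof.
move=> d_on; have b_on r : dotv d (b r) = t by have [] := b_argmin r; exact: d_on.
have d0 := hyperplane_normal_eq0 b_on b_indep.
by split => //; rewrite -(b_on ord0) d0 dotv0l.
Qed.

Lemma slack_eq_min : h < 0 -> forall k, (1 <= k <= N)%N -> slack c k = h.
Proof.
move=> h_neg k kN; case: (eqVneq (slack c k) h) => // slack_k; exfalso.
(* Otherwise every minimizer [s_l u_l] has [l <> k], hence lies on [<d, .> = 1]. *)
have [d d_slope] := prescribe_slopes (fun l => (best_sign c l)%:~R) kN.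
suff [_ /eqP] : d = 0 /\ (1 : R) = 0 by rewrite oner_eq0.
apply: argmin_hyperplane => y y_S h_y.
case: (argmin_edge y_S h_y) => [[_ h0]|[l [lN -> slack_l]]]; first lra.
have lk : l != k by apply: contraNneq slack_k => <-; rewrite slack_l.
by rewrite dotvZ -/(slope d l) d_slope // is_sign_sqr //; exact: best_sign_is_sign.
Qed.

Lemma min_height_eq0 : h = 0.
Proof.
apply/eqP; rewrite eq_le min_height_le0 /= leNgt; apply/negP => h_neg.
pose s := best_sign c; pose S := \sum_(1 <= k < N.+1) s k.
have slopes k : (1 <= k < N.+1)%N -> slope c k = (s k)%:~R * (h - edge_omega k).
  by move=> kN; rewrite slope_of_slack slack_eq_min.
have := sum_slope c; rewrite (eq_big_nat _ _ slopes).
have -> : \sum_(1 <= k < N.+1) (s k)%:~R * (h - edge_omega k)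
          = h * S%:~R - ((s 1%N)%:~R + S%:~R).
  rewrite -sum_int_edge_omega rmorph_sum mulr_sumr -sumrB.
  by apply: eq_bigr => k _; ring.
move=> sum0; have s1_sign := best_sign_is_sign c 1%N; rewrite /s in sum0.
have [S0|[S_ge1|S_le1]] : S = 0 \/ 1 <= S \/ S <= -1 by lia.
- by move: sum0; rewrite S0; case: s1_sign => ->; lra.
- have : (1 : R) <= S%:~R by rewrite (ler_int R 1).
  by case: s1_sign sum0 => -> sum0; nra.
- have : S%:~R <= (-1 : R) by rewrite (ler_int R _ (-1)).
  by case: s1_sign sum0 => -> sum0; nra.
Qed.

Lemma slack_eq_min_but_one j1 j2 : (1 <= j1 <= N)%N -> (1 <= j2 <= N)%N -> j1 != j2 ->
  slack c j1 = h \/ slack c j2 = h.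
Proof.
move=> j1N j2N j12.
case: (eqVneq (slack c j1) h) => [|slack1]; first by left.
case: (eqVneq (slack c j2) h) => [|slack2]; first by right.
have [d d_slope] := prescribe_slopes (fun k => (k == j1)%:R) j2N.
have [d0 _] : d = 0 /\ (0 : R) = 0.
  apply: argmin_hyperplane => y y_S h_y.
  case: (argmin_edge y_S h_y) => [[-> _]|[k [kN -> slack_k]]]; first exact: dotv0.
  have kj1 : k != j1 by apply: contraNneq slack1 => <-; rewrite slack_k.
  have kj2 : k != j2 by apply: contraNneq slack2 => <-; rewrite slack_k.
  by rewrite dotvZ -/(slope d k) d_slope // (negbTE kj1) mulr0.
by have := d_slope j1 j1N j12; rewrite d0 /slope dotv0l eqxx => /eqP; rewrite eq_sym oner_eq0.
Qed.

Lemma missing_edge : exists i, [/\ (1 <= i <= N)%N,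
  forall k, (1 <= k <= N)%N -> k != i -> slack c k = h & i != 1%N -> h < slack c i].
Proof.
case: (boolP (has (fun k => slack c k != h) (index_iota 1 N.+1))).
  case/hasP => i; rewrite mem_index_iota ltnS => iN slack_i; exists i; split => //.
    move=> k kN ki; case: (slack_eq_min_but_one kN iN ki) => // /eqP.
    by rewrite (negbTE slack_i).
  by move=> _; rewrite lt_def slack_i slack_ge.
move=> /hasPn all_tight; exists 1%N; split => // k kN _.
by apply/eqP; apply/negPn; apply: all_tight; rewrite mem_index_iota ltnS.
Qed.

End RegularCell.

Lemma missing_edge_sign c lam i : odd n -> (1 <= i <= N)%N ->
  (forall k, (1 <= k <= N)%N -> k != i -> is_sign (lam k)) ->
  \sum_(1 <= k < N.+1) lam k = 0 ->
  slope c i = (lam 1%N)%:~R - (lam i)%:~R * edge_omega i ->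
  0 <= slack c i -> (i != 1%N -> 0 < slack c i) ->
  lam i = lam 1%N /\ is_sign (lam i).
Proof.
move=> n_odd iN lam_sign lam_sum slope_i slack_i_ge0 slack_i_gt0.
case: (eqVneq i 1%N) => [i1|i_neq1].
  subst i; move: slope_i slack_i_ge0; rewrite /slack /edge_omega eqxx => slope1 slack1.
  split => //.
  have lam1 : lam 1%N = - \sum_(2 <= k < N.+1) lam k.
    by apply/eqP; rewrite -addr_eq0 -big_ltn // lam_sum.
  suff : is_sign (\sum_(2 <= k < N.+1) lam k) by rewrite lam1; case=> ->; [right | left].
  apply: sum_odd_signs_small => [|k|]; first by rewrite size_iota !subSS subn0.
    by rewrite mem_index_iota => /andP[k2 kN]; apply: lam_sign; rewrite ?gtn_eqF //; lia.
  rewrite -normrN -lam1 -(ler_int R) intr_norm.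
  have e : (lam 1%N)%:~R - (lam 1%N)%:~R * 2 = - (lam 1%N)%:~R :> R by ring.
  by move: slack1; rewrite slope1 e normrN; lra.
have lam1_sign : is_sign (lam 1%N) by apply: lam_sign; rewrite // eq_sym.
have : `|lam 1%N - lam i| < 1.
  rewrite -(ltr_int R) intr_norm rmorphB /=.
  by move: (slack_i_gt0 i_neq1); rewrite /slack slope_i /edge_omega (negbTE i_neq1) mulr1; lra.
by move: lam1_sign; rewrite /is_sign; move: (lam 1%N) (lam i) => l1 li; lia.
Qed.

Lemma Delta_normal_of_slack c i : odd n -> (1 <= i <= N)%N ->
  (forall k, (1 <= k <= N)%N -> 0 <= slack c k) ->
  (forall k, (1 <= k <= N)%N -> k != i -> slack c k = 0) ->
  (i != 1%N -> 0 < slack c i) ->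
  exists lam, [/\ in_Lambda n lam, lam i = lam 1%N & Delta_normal c lam i].
Proof.
move=> n_odd iN slack_ge0 tight slack_i.
pose s := best_sign c; pose S := \sum_(1 <= k < N.+1) s k.
pose lam k := if k == i then s i - S else s k.
have iN1 : (1 <= i < N.+1)%N by rewrite ltnS.
have lam_sum : \sum_(1 <= k < N.+1) lam k = 0.
  rewrite (sum_nat_D1 lam iN1) /lam eqxx (eq_bigr s) => [|k /negbTE -> //].
  by move: (sum_nat_D1 s iN1); rewrite -/S => ->; ring.
have lam_sign k : (1 <= k <= N)%N -> k != i -> is_sign (lam k).
  by move=> _ ki; rewrite /lam (negbTE ki); exact: best_sign_is_sign.
have lam_slope k : (1 <= k <= N)%N -> k != i -> slope c k = - (lam k)%:~R * edge_omega k.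
  by move=> kN ki; rewrite slope_of_slack tight // /lam (negbTE ki) sub0r mulrN mulNr.
have slope_i := slope_missing_edge iN lam_sum lam_slope.
have [lam_i1 lam_i_sign] :=
  missing_edge_sign n_odd iN lam_sign lam_sum slope_i (slack_ge0 i iN) slack_i.
exists lam; split => //.
  by split => // k kN; case: (eqVneq k i) => [-> //|]; exact: lam_sign.
by split => //; rewrite slope_i lam_i1; apply: is_sign_edge_omega_bound; rewrite -lam_i1.
Qed.

Lemma Delta_cell_regular (C : vec -> Prop) : (2 <= n)%N ->
  Delta_cell C -> regular_subdivision_cell C.
Proof.
move=> n2 [lam [[lam_sign lam_sum] [i [iN lam_i1 C_hull]]]].
have [c c_normal] := exists_Delta_normal lam_sign lam_sum iN lam_i1.
have argminP := Delta_argminP n2 lam_sign iN c_normal.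
exists c, 0; split; first exact: height_Delta_ge0 n2 lam_sign c_normal.
split.
  exists (fun r : 'I_N => vpt lam (Delta_index i r)); split.
    by move=> r; apply/argminP/Delta_vertex_indexP => //; exists r.
  by rewrite -normr_gt0 det_Delta_simplex.
move=> x; apply: iff_trans (C_hull x) _; apply: conv_ext => y.
exact: iff_trans (Delta_vertexP n2 lam_sign iN c_normal y) (iff_sym (argminP y)).
Qed.

Lemma regular_cell_Delta (C : vec -> Prop) : (2 <= n)%N -> odd n ->
  regular_subdivision_cell C -> Delta_cell C.
Proof.
move=> n2 n_odd [c [h [height_ge]]] /= [[b [b_argmin b_indep]] C_hull].
have h0 := min_height_eq0 n2 height_ge b_argmin b_indep; subst h.
have slack_ge0 k : (1 <= k <= N)%N -> 0 <= slack c k := @slack_ge c 0 n2 height_ge k.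
have [i [iN tight slack_i]] := missing_edge n2 height_ge b_argmin b_indep.
have [lam [lam_Lambda lam_i1 c_normal]] :=
  Delta_normal_of_slack n_odd iN slack_ge0 tight slack_i.
exists lam; split => //; exists i; split => // x.
apply: iff_trans (C_hull x) _; apply: conv_ext => y.
exact: iff_trans (Delta_argminP n2 lam_Lambda.1 iN c_normal y)
                 (iff_sym (Delta_vertexP n2 lam_Lambda.1 iN c_normal y)).
Qed.

Lemma Delta_cell_unimodular (C : vec -> Prop) : (2 <= n)%N ->
  Delta_cell C -> unimodular_simplex_in_S C.
Proof.
move=> n2 [lam [[lam_sign lam_sum] [i [iN lam_i1 C_hull]]]].
have [c c_normal] := exists_Delta_normal lam_sign lam_sum iN lam_i1.
exists (fun r : 'I_N => vpt lam (Delta_index i r)); split.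
  move=> r; have /(Delta_argminP n2 lam_sign iN c_normal) [] // :
    Delta_vertex lam i (vpt lam (Delta_index i r)).
  by apply/Delta_vertex_indexP => //; exists r.
split; first exact: det_Delta_simplex.
move=> x; apply: iff_trans (C_hull x) _; apply: conv_ext => y.
exact: iff_trans (Delta_vertexP n2 lam_sign iN c_normal y) (Delta_vertex_indexP lam y iN).
Qed.

End CyclePolytope.

Theorem theorem5p5 (R : realType) (n : nat) :
  (4 <= n.+1)%N -> ~~ odd n.+1 ->
  (forall C : 'rV[R]_n -> Prop,
     regular_subdivision_cell C <-> Delta_cell C) /\
  (forall C : 'rV[R]_n -> Prop,
     regular_subdivision_cell C -> unimodular_simplex_in_S C).
Proof.
move=> N_ge4 N_even.
have n2 : (2 <= n)%N by exact: ltnW.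
have n_odd : odd n by move: N_even; rewrite /= negbK.
split=> C; first by split; [exact: regular_cell_Delta | exact: Delta_cell_regular].
by move/(regular_cell_Delta n2 n_odd); exact: Delta_cell_unimodular.
Qed.
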